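(* Let $\Omega\subset\mathbb{R}^N$ be a bounded smooth domain, $0<\sigma<1$, $\lambda>0$, and let $(u,v)$ be any smooth solution of \[ -\Delta u=\lambda e^{v},\quad -\Delta v=\sigma\lambda e^{u}\ \text{in }\Omega,\qquad u=v=0\ \text{on }\partial\Omega, \] and let $(u_{\lambda,\sigma},v_{\lambda,\sigma})$ be the minimal solution of the same problem. Set $u_o=u-u_{\lambda,\sigma}$, $v_o=v-v_{\lambda,\sigma}$. Then (i) $v\le u$ in $\Omega$; (ii) $\sigma u\le v$ in $\Omega$; (iii) $\sigma u_o\le v_o$ in $\Omega$. Moreover, (iv) there exists $\lambda_1>0$ (independent of $\sigma$) such that for all $0<\lambda<\lambda_1$ and all $0<\sigma<1$ one has $v_o\le u_o$ in $\Omega$.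
   Context: The minimal solution is the componentwise pointwise smallest smooth solution; it exists whenever some smooth solution exists, and $u_o,v_o\ge0$. *)

From Stdlib Require Import Reals.
From mathcomp Require Import ssreflect ssrbool eqtype ssrnat fintype bigop.

Set Implicit Arguments.
Unset Strict Implicit.

Local Open Scope R_scope.

Definition Pt (N : nat) := 'I_N -> R.

Definition dist {N : nat} (x y : Pt N) : R :=
  sqrt (\big[Rplus/0]_(i < N) Rsqr (x i - y i)).

Definition upd {N : nat} (x : Pt N) (i : 'I_N) (t : R) : Pt N :=
  fun j => if j == i then t else x j.

Definition partial {N : nat} (i : 'I_N) (f : Pt N -> R) (x : Pt N) (l : R) : Prop :=
  derivable_pt_lim (fun t => f (upd x i t)) (x i) l.

Definition is_open {N : nat} (U : Pt N -> Prop) : Prop :=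
  forall x, U x -> exists r, 0 < r /\ forall y, dist x y < r -> U y.

Definition closure {N : nat} (U : Pt N -> Prop) (x : Pt N) : Prop :=
  forall eps, 0 < eps -> exists y, U y /\ dist x y < eps.

Definition boundary {N : nat} (U : Pt N -> Prop) (x : Pt N) : Prop :=
  closure U x /\ ~ U x.

Definition bounded {N : nat} (U : Pt N -> Prop) : Prop :=
  exists M, forall x, U x -> dist x (fun _ => 0) <= M.

Definition connected {N : nat} (U : Pt N -> Prop) : Prop :=
  forall A B : Pt N -> Prop, is_open A -> is_open B ->
    (forall x, U x -> A x \/ B x) ->
    (forall x, U x -> A x -> B x -> False) ->
    (forall x, U x -> A x) \/ (forall x, U x -> B x).

Definition cont_within {N : nat} (S : Pt N -> Prop) (f : Pt N -> R) (x : Pt N) : Prop :=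
  forall eps, 0 < eps -> exists delta, 0 < delta /\
    forall y, S y -> dist x y < delta -> Rabs (f y - f x) < eps.

(* D is a family of all iterated partial derivatives of f on the open set U
   (D [:: i1; ...; ik] = d_i1 ... d_ik f), each of which extends continuously
   to the closure of U. *)
Definition deriv_family {N : nat} (U : Pt N -> Prop) (f : Pt N -> R)
  (D : list 'I_N -> Pt N -> R) : Prop :=
  (forall x, closure U x -> D nil x = f x) /\
  (forall l i x, U x -> partial i (D l) x (D (cons i l) x)) /\
  (forall l x, closure U x -> cont_within (closure U) (D l) x).

Definition smooth_upto {N : nat} (U : Pt N -> Prop) (f : Pt N -> R) : Prop :=
  exists D, deriv_family U f D.

(* bounded smooth (C^infinity) domain: nonempty, open, connected, bounded,
   boundary locally the graph of a smooth function over a coordinate hyperplane,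
   with the domain lying on one side. *)
Definition smooth_bounded_domain {N : nat} (Om : Pt N -> Prop) : Prop :=
  (exists x, Om x) /\ is_open Om /\ connected Om /\ bounded Om /\
  forall p, boundary Om p ->
    exists (r : R) (i : 'I_N) (g : Pt N -> R) (s : R),
      0 < r /\ (s = 1 \/ s = -1) /\
      smooth_upto (fun _ => True) g /\
      (forall x t, g (upd x i t) = g x) /\
      (forall x, dist x p < r -> (Om x <-> 0 < s * (x i - g x))).

Definition laplacian_at {N : nat} (U : Pt N -> Prop) (f : Pt N -> R) (x : Pt N) (L : R) : Prop :=
  exists (g : 'I_N -> Pt N -> R) (l : 'I_N -> R),
    (forall i y, U y -> partial i f y (g i y)) /\
    (forall i, partial i (g i) x (l i)) /\
    L = \big[Rplus/0]_(i < N) l i.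

Definition is_solution {N : nat} (Om : Pt N -> Prop) (lam sigma : R)
  (u v : Pt N -> R) : Prop :=
  smooth_upto Om u /\ smooth_upto Om v /\
  (forall x, Om x -> laplacian_at Om u x (- (lam * exp (v x)))) /\
  (forall x, Om x -> laplacian_at Om v x (- (sigma * lam * exp (u x)))) /\
  (forall x, boundary Om x -> u x = 0 /\ v x = 0).

Definition is_minimal_solution {N : nat} (Om : Pt N -> Prop) (lam sigma : R)
  (u v : Pt N -> R) : Prop :=
  is_solution Om lam sigma u v /\
  forall u' v', is_solution Om lam sigma u' v' ->
    forall x, Om x -> u x <= u' x /\ v x <= v' x.

(* Every estimate is an instance of the weak maximum principle: a function
   w, continuous on the closure of Ω, nonpositive on ∂Ω, whose Laplacian is
   positive wherever w is positive, is nonpositive in Ω (at an interior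
   positive maximum the Laplacian would be both positive and nonpositive).

   Applied to (u, v) and to the deviations (u - u_min, v - v_min) with
   suitable coefficients, each claim reduces to a pointwise inequality about
   the exponential.  Part (iv) holds in fact for every λ > 0 (take λ1 = 1). *)

From Pilot Require Import Defs.
From Stdlib Require Import Reals Lra Psatz.
From mathcomp Require Import all_boot all_order all_algebra.
From mathcomp Require Import all_classical all_reals topology normedtype derive.
From mathcomp Require Import Rstruct Rstruct_topology.
Import Order.TTheory GRing.Theory Num.Theory.

Set Implicit Arguments.
Unset Strict Implicit.

Section CompactMaximum.
Local Open Scope ring_scope.
Local Open Scope classical_set_scope.

Lemma ball_coord N (v w : 'rV[R]_N) (e : R) :
  ball v e w -> forall i, `|v ord0 i - w ord0 i| < e.
Proof. by move=> H i; have := (H : mx_ball _ _ _ _ _ _ _).2 ord0 i. Qed.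

Lemma compact_coord_max (N : nat) (K : Pt N -> Prop) (f : Pt N -> R) :
  (exists x, K x) ->
  (exists M : R, forall x, K x -> forall i, `|x i| <= M) ->
  (forall x, (forall d : R, 0 < d -> exists y, K y /\ forall i, `|x i - y i| < d) -> K x) ->
  (forall x, K x -> forall eps : R, 0 < eps -> exists d : R, 0 < d /\
      forall y, K y -> (forall i, `|x i - y i| < d) -> `|f x - f y| < eps) ->
  exists x0, K x0 /\ forall y, K y -> f y <= f x0.
Proof.
move=> [x1 Kx1] [M HM] Kcl fc.
pose phi (v : 'rV[R]_N) : Pt N := fun i => v ord0 i.
have phiK (x : Pt N) : phi (\row_i x i) = x by apply: funext => i; rewrite /phi mxE.
pose A := [set v | K (phi v)].
have A0 : A !=set0 by exists (\row_i x1 i); rewrite /A /= phiK.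
have clA : closed A.
  move=> v clv; apply: Kcl => d d0.
  have [w [Aw bw]] := clv _ (nbhsx_ballx v d d0).
  by exists (phi w); split => // i; apply: ball_coord.
have cA : compact A.
  apply: (subclosed_compact clA
    (@rV_compact _ _ (fun=> `[(- M), M]) (fun=> @segment_compact _ _ _))).
  move=> v Av i /=; rewrite in_itv /= -ler_norml; exact: HM.
have cf : {within A, continuous (fun v => f (phi v))}.
  apply/subspace_continuousP => v Av.
  rewrite /from_subspace; apply/(@cvgrPdist_lt R R^o) => e e0.
  have [d [d0 Hd]] := fc _ Av e e0.
  rewrite /within; apply/nbhs_ballP; exists d => //= w bw Aw.
  apply: Hd => //; exact: ball_coord.
have [c Ac Hc] := EVT_max_rV A0 cA cf.
exists (phi c); split; first by move: Ac; rewrite inE.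
by move=> y Ky; rewrite -(phiK y); apply: Hc; rewrite inE /A /= phiK.
Qed.

End CompactMaximum.

(* Re-import the definitions of the statement, whose names (closure,
   bounded, connected, ...) are shadowed by the analysis library. *)
Import Pilot.Defs.
Local Open Scope R_scope.

Lemma sum_nonneg N (P : pred 'I_N) (l : 'I_N -> R) :
  (forall i, 0 <= l i) -> 0 <= \big[Rplus/0]_(i < N | P i) l i.
Proof. move=> H; apply: (big_rec (fun s => 0 <= s)) => [|i s _ Hs]; [lra | have := H i; lra]. Qed.

Lemma sum_nonpos N (l : 'I_N -> R) :
  (forall i, l i <= 0) -> \big[Rplus/0]_(i < N) l i <= 0.
Proof. move=> H; apply: (big_rec (fun s => s <= 0)) => [|i s _ Hs]; [lra | have := H i; lra]. Qed.

Lemma sum_lincomb N (l1 l2 : 'I_N -> R) a b :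
  \big[Rplus/0]_(i < N) (a * l1 i + b * l2 i) =
  a * \big[Rplus/0]_(i < N) l1 i + b * \big[Rplus/0]_(i < N) l2 i.
Proof. apply: (big_rec3 (fun x y z => x = a * y + b * z)) => [|i x y z _ ->]; ring. Qed.

Lemma coord_le_dist N (x y : Pt N) i : Rabs (x i - y i) <= dist x y.
Proof.
rewrite /dist (bigD1 i) //= -sqrt_Rsqr_abs; apply: sqrt_le_1_alt.
rewrite -{1}(Rplus_0_r (Rsqr _)); apply: Rplus_le_compat_l.
by apply: sum_nonneg => j; apply: Rle_0_sqr.
Qed.

Lemma iter_Rplus n c : iter n (Rplus c) 0 = INR n * c.
Proof. by elim: n => [|n IH]; [rewrite /=; ring | rewrite iterS S_INR IH; ring]. Qed.

Lemma dist_lt_of_coord N (x y : Pt N) eps : 0 < eps ->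
  (forall i, Rabs (x i - y i) < eps / (INR N + 1)) -> dist x y < eps.
Proof.
move=> e0 H.
have N0 := pos_INR N.
set d := eps / (INR N + 1) in H *.
have d0 : 0 < d by apply: Rdiv_lt_0_compat; lra.
have Hs : \big[Rplus/0]_(i < N) Rsqr (x i - y i) <= INR N * Rsqr d.
  have -> : INR N * Rsqr d = \big[Rplus/0]_(i < N) Rsqr d.
    by rewrite big_const_ord iter_Rplus.
  apply: (big_rec2 (fun a b => a <= b)) => [|i a b _ Hab]; first lra.
  suff : Rsqr (x i - y i) <= Rsqr d by lra.
  rewrite Rsqr_abs; apply: Rsqr_incr_1; have := H i; have := Rabs_pos (x i - y i); lra.
have Hlt : INR N * Rsqr d < Rsqr eps.
  have -> : eps = d * (INR N + 1) by rewrite /d; field; lra.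
  rewrite Rsqr_mult /Rsqr; nra.
rewrite /dist -(sqrt_Rsqr eps); last lra.
apply: sqrt_lt_1_alt; split; last lra.
exact: (sum_nonneg xpredT (fun i => Rle_0_sqr _)).
Qed.

Lemma closure_sub N (Om : Pt N -> Prop) x : Om x -> closure Om x.
Proof.
move=> Ox eps e0; exists x; split => //.
suff -> : dist x x = 0 by [].
rewrite /dist (eq_bigr (fun _ => 0)) => [|i _]; last by rewrite Rminus_diag Rsqr_0.
by rewrite big1_eq sqrt_0.
Qed.

Lemma closure_coord N (Om : Pt N -> Prop) x :
  closure Om x <-> (forall d, 0 < d -> exists y, Om y /\ forall i, Rabs (x i - y i) < d).
Proof.
split => H d d0.
- have [y [Oy Hy]] := H d d0; exists y; split => // i.
  have := coord_le_dist x y i; lra.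
- have N0 := pos_INR N.
  have [y [Oy Hy]] := H (d / (INR N + 1)) ltac:(apply: Rdiv_lt_0_compat; lra).
  by exists y; split => //; exact: dist_lt_of_coord.
Qed.

Lemma closure_max N (Om : Pt N -> Prop) (w : Pt N -> R) :
  (exists x, Om x) -> bounded Om ->
  (forall x, closure Om x -> cont_within (closure Om) w x) ->
  exists x0, closure Om x0 /\ forall y, closure Om y -> w y <= w x0.
Proof.
move=> [x1 Ox1] [M HM] hc.
have N0 := pos_INR N.
have [x0 [Kx0 Hx0]] : exists x0, closure Om x0 /\ forall y, closure Om y -> (w y <= w x0)%O.
  apply: compact_coord_max.
  - by exists x1; apply: closure_sub.
  - exists (M + 1) => x cx i; apply/RleP; change (Rabs (x i) <= M + 1).
    have [y [Oy hy]] := cx 1 Rlt_0_1.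
    have := coord_le_dist x y i; have := coord_le_dist y (fun _ => 0) i.
    have := HM y Oy; have := Rabs_triang (x i - y i) (y i).
    rewrite Rminus_0_r (_ : x i - y i + y i = x i); [lra | ring].
  - move=> x hx; apply/closure_coord => d d0.
    have d2 : 0 < d / 2 by lra.
    have [y [cy hy]] := hx (d / 2) (introT RltP d2).
    have [z [Oz hz]] := iffLR (closure_coord Om y) cy (d / 2) d2.
    exists z; split => // i.
    have := Rabs_triang (x i - y i) (y i - z i).
    have : Rabs (x i - y i) < d / 2 by move/RltP: (hy i).
    have := hz i.
    rewrite (_ : x i - y i + (y i - z i) = x i - z i); [lra | ring].
  - move=> x cx eps /RltP e0.
    have [del [del0 hd]] := hc x cx eps e0.
    exists (del / (INR N + 1)); split; first by apply/RltP; apply: Rdiv_lt_0_compat; lra.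
    move=> y cy hy; apply/RltP; change (Rabs (w x - w y) < eps).
    rewrite Rabs_minus_sym; apply: hd => //.
    by apply: dist_lt_of_coord => // i; move/RltP: (hy i).
by exists x0; split => // y cy; apply/RleP; exact: Hx0.
Qed.

Lemma upd_same N (x : Pt N) i : upd x i (x i) = x.
Proof. by apply: funext => j; rewrite /upd; case: eqP => [->|]. Qed.

Lemma upd_upd N (x : Pt N) i t s : upd (upd x i t) i s = upd x i s.
Proof. by apply: funext => j; rewrite /upd; case: (j == i). Qed.

Lemma upd_at N (x : Pt N) i t : upd x i t i = t.
Proof. by rewrite /upd eqxx. Qed.

Lemma upd_coord N (x : Pt N) i t j : Rabs (x j - upd x i t j) <= Rabs (x i - t).
Proof.
rewrite /upd; case: eqP => [->|_]; first lra.
rewrite Rminus_diag Rabs_R0; exact: Rabs_pos.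
Qed.

Lemma second_deriv_max (phi psi : R -> R) a rho l : 0 < rho ->
  (forall t, Rabs (t - a) < rho -> derivable_pt_lim phi t (psi t)) ->
  derivable_pt_lim psi a l ->
  (forall t, Rabs (t - a) < rho -> phi t <= phi a) -> l <= 0.
Proof.
move=> r0 hphi hpsi hmax.
have hpa : psi a = 0.
  have ha : Rabs (a - a) < rho by rewrite Rminus_diag Rabs_R0.
  pose pr := exist (fun l => derivable_pt_abs phi a l) (psi a) (hphi a ha).
  apply: (@deriv_maximum phi (a - rho) (a + rho) a pr); try lra.
  by move=> t h1 h2; apply: hmax; apply: Rabs_def1; lra.
case: (Rle_lt_dec l 0) => // hl; exfalso.
have [del hdel] := hpsi (l / 2) ltac:(lra).
have hd0 := cond_pos del.
set h0 := Rmin del rho / 2.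
have [h00 [h0d h0r]] : 0 < h0 /\ h0 < del /\ h0 < rho.
  by rewrite /h0; have := Rmin_pos _ _ hd0 r0; have := Rmin_l del rho;
     have := Rmin_r del rho; lra.
have [c [hc1 hc2]] : exists c, phi (a + h0) - phi a = psi c * (a + h0 - a) /\ a < c < a + h0.
  by apply: MVT_cor2 => [|c hc]; [lra | apply: hphi; apply: Rabs_def1; lra].
(* psi grows like l * (c - a) > 0 near a *)
have hpc : 0 < psi c.
  have := hdel (c - a) ltac:(lra) ltac:(apply: Rabs_def1; lra).
  rewrite (_ : a + (c - a) = c); last ring.
  rewrite hpa Rminus_0_r => /Rabs_def2 hq.
  have -> : psi c = psi c / (c - a) * (c - a) by field; lra.
  apply: Rmult_lt_0_compat; lra.
have := hmax (a + h0) ltac:(apply: Rabs_def1; lra).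
have : 0 < psi c * (a + h0 - a) by apply: Rmult_lt_0_compat; lra.
lra.
Qed.

(* At an interior maximum the Laplacian is nonpositive: each pure second
   derivative is, by the one-variable test along the coordinate line. *)
Lemma laplacian_le0_at_max N (Om : Pt N -> Prop) (w : Pt N -> R) x0 L :
  is_open Om -> Om x0 -> (forall y, Om y -> w y <= w x0) ->
  laplacian_at Om w x0 L -> L <= 0.
Proof.
move=> hop Ox0 hmax [g [l [hg [hl ->]]]].
apply: sum_nonpos => i.
have [r [r0 hr]] := hop x0 Ox0.
have N0 := pos_INR N.
have rho0 : 0 < r / (INR N + 1) by apply: Rdiv_lt_0_compat; lra.
have line_in : forall t, Rabs (t - x0 i) < r / (INR N + 1) -> Om (upd x0 i t).
  move=> t ht; apply: hr; apply: dist_lt_of_coord => // j.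
  apply: (Rle_lt_trans _ _ _ (upd_coord x0 i t j)); rewrite Rabs_minus_sym; lra.
apply: (second_deriv_max (phi := fun t => w (upd x0 i t))
                         (psi := fun t => g i (upd x0 i t)) rho0).
- move=> t ht; have := hg i _ (line_in t ht).
  by rewrite /partial upd_at (funext (fun s => congr1 w (upd_upd x0 i t s))).
- exact: hl.
- by move=> t ht; rewrite upd_same; exact: hmax (line_in t ht).
Qed.

Definition regular {N : nat} (Om : Pt N -> Prop) (w L : Pt N -> R) : Prop :=
  (forall x, closure Om x -> cont_within (closure Om) w x) /\
  (forall x, Om x -> laplacian_at Om w x (L x)).

Lemma max_principle N (Om : Pt N -> Prop) (w L : Pt N -> R) :
  smooth_bounded_domain Om -> regular Om w L ->
  (forall x, boundary Om x -> w x <= 0) ->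
  (forall x, Om x -> 0 < w x -> 0 < L x) ->
  forall x, Om x -> w x <= 0.
Proof.
move=> [hne [hop [_ [hb _]]]] [hc hlap] hbd hpos x Ox.
have [x0 [cx0 hx0]] := closure_max hne hb hc.
have := hx0 x (closure_sub Ox).
case: (Rle_lt_dec (w x0) 0) => hw; first lra.
case: (pselect (Om x0)) => Ox0; last by have := hbd x0 (conj cx0 Ox0); lra.
have : L x0 <= 0.
  apply: (laplacian_le0_at_max hop Ox0) (hlap x0 Ox0).
  by move=> y Oy; exact: hx0 y (closure_sub Oy).
have := hpos x0 Ox0 hw; lra.
Qed.

Lemma cont_lincomb N (S : Pt N -> Prop) (f g : Pt N -> R) a b c x :
  cont_within S f x -> cont_within S g x ->
  cont_within S (fun y => a * f y + b * g y + c) x.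
Proof.
move=> hf hg eps e0.
have ha := Rabs_pos a; have hb := Rabs_pos b.
set e' := eps / (Rabs a + Rabs b + 1).
have e'0 : 0 < e' by apply: Rdiv_lt_0_compat; lra.
have [d1 [d10 H1]] := hf e' e'0.
have [d2 [d20 H2]] := hg e' e'0.
exists (Rmin d1 d2); split; first exact: Rmin_pos.
move=> y Sy hy.
have h1 := H1 y Sy (Rlt_le_trans _ _ _ hy (Rmin_l _ _)).
have h2 := H2 y Sy (Rlt_le_trans _ _ _ hy (Rmin_r _ _)).
rewrite (_ : a * f y + b * g y + c - (a * f x + b * g x + c) =
             a * (f y - f x) + b * (g y - g x)); last ring.
apply: (Rle_lt_trans _ _ _ (Rabs_triang _ _)); rewrite !Rabs_mult.
have : Rabs a * Rabs (f y - f x) <= Rabs a * e' by apply: Rmult_le_compat_l; lra.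
have : Rabs b * Rabs (g y - g x) <= Rabs b * e' by apply: Rmult_le_compat_l; lra.
have : eps = e' * (Rabs a + Rabs b + 1) by rewrite /e'; field; lra.
nra.
Qed.

Lemma laplacian_lincomb N (Om : Pt N -> Prop) (f g : Pt N -> R) x L1 L2 a b c :
  laplacian_at Om f x L1 -> laplacian_at Om g x L2 ->
  laplacian_at Om (fun y => a * f y + b * g y + c) x (a * L1 + b * L2).
Proof.
move=> [g1 [l1 [A1 [B1 ->]]]] [g2 [l2 [A2 [B2 ->]]]].
exists (fun i y => a * g1 i y + b * g2 i y), (fun i => a * l1 i + b * l2 i).
split; [|split]; last by rewrite sum_lincomb.
- move=> i y Oy; rewrite /partial -(Rplus_0_r (_ + _)).
  apply: derivable_pt_lim_plus; last exact: derivable_pt_lim_const.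
  by apply: derivable_pt_lim_plus; apply: derivable_pt_lim_scal; [exact: A1 | exact: A2].
- move=> i; exact: (derivable_pt_lim_plus _ _ _ _ _
    (derivable_pt_lim_scal _ a _ _ (B1 i)) (derivable_pt_lim_scal _ b _ _ (B2 i))).
Qed.

Lemma regular_lincomb N (Om : Pt N -> Prop) (f g Lf Lg : Pt N -> R) a b c :
  regular Om f Lf -> regular Om g Lg ->
  regular Om (fun y => a * f y + b * g y + c) (fun y => a * Lf y + b * Lg y).
Proof.
move=> [cf lf] [cg lg]; split=> x hx.
- exact: cont_lincomb (cf x hx) (cg x hx).
- exact: laplacian_lincomb (lf x hx) (lg x hx).
Qed.

Lemma comparison N (Om : Pt N -> Prop) (f g Lf Lg : Pt N -> R) a b c :
  smooth_bounded_domain Om -> regular Om f Lf -> regular Om g Lg ->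
  (forall x, boundary Om x -> f x = 0 /\ g x = 0) -> c <= 0 ->
  (forall x, Om x -> 0 < a * f x + b * g x + c -> 0 < a * Lf x + b * Lg x) ->
  forall x, Om x -> a * f x + b * g x + c <= 0.
Proof.
move=> hOm rf rg hbd hc hpos.
apply: (max_principle hOm (regular_lincomb a b c rf rg)) => // x /hbd [-> ->]; lra.
Qed.

Lemma smooth_cont N (Om : Pt N -> Prop) u :
  smooth_upto Om u -> forall x, closure Om x -> cont_within (closure Om) u x.
Proof.
move=> [D [hD0 [_ hD2]]] x cx eps e0.
have [d [d0 hd]] := hD2 nil x cx eps e0.
by exists d; split => // y cy hy; rewrite -(hD0 y cy) -(hD0 x cx); exact: hd.
Qed.

Lemma solution_regular N (Om : Pt N -> Prop) lam sigma u v :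
  is_solution Om lam sigma u v ->
  regular Om u (fun x => - (lam * exp (v x))) /\
  regular Om v (fun x => - (sigma * lam * exp (u x))).
Proof.
move=> [su [sv [lu [lv _]]]].
by split; split => //; exact: smooth_cont.
Qed.

Lemma regular_ext N (Om : Pt N -> Prop) (w L L' : Pt N -> R) :
  regular Om w L -> L =1 L' -> regular Om w L'.
Proof. by move=> rw /funext <-. Qed.

Lemma regular_sub N (Om : Pt N -> Prop) (f g Lf Lg : Pt N -> R) :
  regular Om f Lf -> regular Om g Lg ->
  regular Om (fun y => f y - g y) (fun y => Lf y - Lg y).
Proof.
move=> rf rg; have := regular_lincomb 1 (-1) 0 rf rg.
rewrite (_ : (fun y => 1 * f y + -1 * g y + 0) = fun y => f y - g y).
  by move/regular_ext; apply => y; ring.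
by apply: funext => y; ring.
Qed.

Lemma deviation_regular N (Om : Pt N -> Prop) lam sigma u v um vm :
  is_solution Om lam sigma u v -> is_solution Om lam sigma um vm ->
  regular Om (fun x => u x - um x) (fun x => - (lam * (exp (v x) - exp (vm x)))) /\
  regular Om (fun x => v x - vm x) (fun x => - (sigma * lam * (exp (u x) - exp (um x)))).
Proof.
move=> /solution_regular [ru rv] /solution_regular [rum rvm].
split.
- by refine (regular_ext (regular_sub ru rum) _) => x; ring.
- by refine (regular_ext (regular_sub rv rvm) _) => x; ring.
Qed.

Lemma solution_boundary N (Om : Pt N -> Prop) lam sigma u v :
  is_solution Om lam sigma u v -> forall x, boundary Om x -> u x = 0 /\ v x = 0.
Proof. by case=> [_ [_ [_ [_ hb]]]]. Qed.

Lemma exp_le x y : x <= y -> exp x <= exp y.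
Proof. by case/Rle_lt_or_eq_dec => [/exp_increasing|->]; lra. Qed.

Lemma exp_sub_factor a b : exp a - exp b = exp b * (exp (a - b) - 1).
Proof. by rewrite Rmult_minus_distr_l -exp_plus (_ : b + (a - b) = a); [ring | ring]. Qed.

Lemma exp_increment_lt A B p q : 0 < B -> A <= B -> 0 <= p -> p < q ->
  A * (exp p - 1) < B * (exp q - 1).
Proof.
move=> hB hAB hp hpq.
have hp1 : 0 <= exp p - 1 by have := exp_ineq1_le p; lra.
have : exp p < exp q by exact: exp_increasing.
have : A * (exp p - 1) <= B * (exp p - 1) by apply: Rmult_le_compat_r.
nra.
Qed.

Section SolutionEstimates.
Variables (N : nat) (Om : Pt N -> Prop) (lam sigma : R) (u v : Pt N -> R).
Hypotheses (hOm : smooth_bounded_domain Om) (hs0 : 0 < sigma) (hs1 : sigma < 1)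
  (hlam : 0 < lam) (hsol : is_solution Om lam sigma u v).

Let ru := (solution_regular hsol).1.
Let rv := (solution_regular hsol).2.
Let hbd := solution_boundary hsol.

(* u is superharmonic, hence nonnegative. *)
Lemma solution_u_nonneg x : Om x -> 0 <= u x.
Proof.
move=> Ox; suff : -1 * u x + 0 * v x + 0 <= 0 by lra.
apply: (comparison hOm ru rv hbd (Rle_refl 0) _ Ox) => y Oy _.
have := exp_pos (v y); nra.
Qed.

(* (i) v <= u: where v > u, Δ(v - u) = λ (e^v - σ e^u) > 0. *)
Lemma solution_v_le_u x : Om x -> v x <= u x.
Proof.
move=> Ox; suff : -1 * u x + 1 * v x + 0 <= 0 by lra.
apply: (comparison hOm ru rv hbd (Rle_refl 0) _ Ox) => y Oy hw.
rewrite (_ : _ + _ = lam * (exp (v y) - sigma * exp (u y))); last ring.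
apply: Rmult_lt_0_compat => //.
have := exp_increasing (u y) (v y) ltac:(lra); have := exp_pos (u y); nra.
Qed.

(* (ii) σ u <= v: where v < σ u <= u, Δ(σ u - v) = σ λ (e^u - e^v) > 0. *)
Lemma solution_sigma_u_le_v x : Om x -> sigma * u x <= v x.
Proof.
move=> Ox; suff : sigma * u x + -1 * v x + 0 <= 0 by lra.
apply: (comparison hOm ru rv hbd (Rle_refl 0) _ Ox) => y Oy hw.
rewrite (_ : _ + _ = sigma * lam * (exp (u y) - exp (v y))); last ring.
apply: Rmult_lt_0_compat; first exact: Rmult_lt_0_compat.
have := solution_u_nonneg Oy => hu.
have := exp_increasing (v y) (u y) ltac:(nra); lra.
Qed.

(* σ e^u <= e^v, i.e. u - v + ln σ <= 0: where positive,
   Δ(u - v) = λ (σ e^u - e^v) > 0. *)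
Lemma solution_exp_ratio x : Om x -> sigma * exp (u x) <= exp (v x).
Proof.
move=> Ox.
have hln : ln sigma < 0 by rewrite -ln_1; apply: ln_increasing.
suff : 1 * u x + -1 * v x + ln sigma <= 0.
  by move=> h; rewrite -{1}(exp_ln sigma hs0) -exp_plus; apply: exp_le; lra.
apply: (comparison hOm ru rv hbd (Rlt_le _ _ hln) _ Ox) => y Oy hw.
rewrite (_ : _ + _ = lam * (sigma * exp (u y) - exp (v y))); last ring.
apply: Rmult_lt_0_compat => //.
have : exp (v y) < exp (ln sigma + u y) by apply: exp_increasing; lra.
by rewrite exp_plus exp_ln //; lra.
Qed.

End SolutionEstimates.

Section DeviationEstimates.
Variables (N : nat) (Om : Pt N -> Prop) (lam sigma : R) (u v um vm : Pt N -> R).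
Hypotheses (hOm : smooth_bounded_domain Om) (hs0 : 0 < sigma) (hs1 : sigma < 1)
  (hlam : 0 < lam) (hsol : is_solution Om lam sigma u v)
  (hmin : is_minimal_solution Om lam sigma um vm).

Let rp := (deviation_regular hsol hmin.1).1.
Let rq := (deviation_regular hsol hmin.1).2.

Let dev_boundary x : boundary Om x -> u x - um x = 0 /\ v x - vm x = 0.
Proof.
move=> hx; have [-> ->] := solution_boundary hsol hx.
by have [-> ->] := solution_boundary hmin.1 hx; split; ring.
Qed.

(* Where it fails, 0 <= v - vm < u - um and
   vm <= um, so e^v - e^vm < e^u - e^um, i.e. the Laplacian of
   σ (u - um) - (v - vm), namely σ λ ((e^u - e^um) - (e^v - e^vm)), is positive. *)
Lemma deviation_lower x : Om x -> sigma * (u x - um x) <= v x - vm x.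
Proof.
move=> Ox; suff : sigma * (u x - um x) + -1 * (v x - vm x) + 0 <= 0 by lra.
apply: (comparison hOm rp rq dev_boundary (Rle_refl 0) _ Ox) => y Oy hw.
have [hu hv] := hmin.2 u v hsol y Oy.
have hvm := solution_v_le_u hOm hs1 hlam hmin.1 Oy.
rewrite (_ : _ + _ = sigma * lam * ((exp (u y) - exp (um y)) - (exp (v y) - exp (vm y))));
  last ring.
apply: Rmult_lt_0_compat; first exact: Rmult_lt_0_compat.
rewrite !exp_sub_factor; apply: Rlt_Rminus.
apply: exp_increment_lt; [exact: exp_pos | exact: exp_le | lra | nra].
Qed.

(* Where it fails, 0 <= u - um < v - vm and
   σ e^um <= e^vm, so σ (e^u - e^um) < e^v - e^vm, i.e. the Laplacian of
   (v - vm) - (u - um), namely λ ((e^v - e^vm) - σ (e^u - e^um)), is positive. *)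
Lemma deviation_upper x : Om x -> v x - vm x <= u x - um x.
Proof.
move=> Ox; suff : -1 * (u x - um x) + 1 * (v x - vm x) + 0 <= 0 by lra.
apply: (comparison hOm rp rq dev_boundary (Rle_refl 0) _ Ox) => y Oy hw.
have [hu hv] := hmin.2 u v hsol y Oy.
have hratio := solution_exp_ratio hOm hs0 hs1 hlam hmin.1 Oy.
rewrite (_ : _ + _ = lam * ((exp (v y) - exp (vm y)) - sigma * (exp (u y) - exp (um y))));
  last ring.
apply: Rmult_lt_0_compat => //.
rewrite !exp_sub_factor -Rmult_assoc; apply: Rlt_Rminus.
apply: exp_increment_lt; [exact: exp_pos | exact: hratio | lra | lra].
Qed.

End DeviationEstimates.

Unset Implicit Arguments.

Theorem mainTheorem4 (N : nat) (Om : Pt N -> Prop) (hOm : smooth_bounded_domain Om) :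
  (forall (sigma lam : R) (u v um vm : Pt N -> R),
     0 < sigma -> sigma < 1 -> 0 < lam ->
     is_solution Om lam sigma u v ->
     is_minimal_solution Om lam sigma um vm ->
     forall x, Om x ->
       v x <= u x /\
       sigma * u x <= v x /\
       sigma * (u x - um x) <= v x - vm x) /\
  (exists lam1 : R, 0 < lam1 /\
     forall (lam sigma : R) (u v um vm : Pt N -> R),
       0 < lam -> lam < lam1 -> 0 < sigma -> sigma < 1 ->
       is_solution Om lam sigma u v ->
       is_minimal_solution Om lam sigma um vm ->
       forall x, Om x -> v x - vm x <= u x - um x).
Proof.
split.
- move=> sigma lam u v um vm hs0 hs1 hlam hsol hmin x Ox.
  split; first exact: (solution_v_le_u hOm hs1 hlam hsol Ox).
  split; first exact: (solution_sigma_u_le_v hOm hs0 hs1 hlam hsol Ox).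
  exact: (deviation_lower hOm hs0 hs1 hlam hsol hmin Ox).
- (* the upper deviation bound holds for every λ > 0 *)
  exists 1; split; first lra.
  move=> lam sigma u v um vm hlam _ hs0 hs1 hsol hmin x Ox.
  exact: (deviation_upper hOm hs0 hs1 hlam hsol hmin Ox).
Qed.
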